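(* There is no automorphism $\varphi$ of $E$ of type 4 such that its linearization $\varphi_\ell$ is the identity map on $E$.
   Context: $F$ is a field of characteristic zero, $L$ an infinite-dimensional $F$-vector space with basis $e_1,e_2,\ldots$, $E$ the Grassmann algebra of $L$. An automorphism $\varphi$ of $E$ with $\varphi^2=\mathrm{id}$ is of type 4 if for every basis $\gamma$ of $L$ no element $v\in\gamma$ satisfies $\varphi(v)=\pm v$. Linearization: write $\varphi(e_i)=u_i+v_i$ with $u_i\in L$ and $v_i$ a linear combination of monomials of length $\ge2$; $\varphi_\ell$ is the endomorphism of $E$ with $\varphi_\ell(e_i)=u_i$ for all $i$. *)

From HB Require Import structures.
From mathcomp Require Import all_boot all_order all_algebra.
From mathcomp Require Import finmap.
Set Implicit Arguments. Unset Strict Implicit. Unset Printing Implicit Defensive.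
Import Order.TTheory GRing.Theory Num.Theory.
Local Open Scope ring_scope.
Local Open Scope fset_scope.

Section Grassmann.
Variable F : fieldType.

(* A monomial e_{i1} ... e_{ik} (i1 < ... < ik) is encoded by the finite set
   {i1,...,ik}; an element of E is a finitely supported family of
   coefficients indexed by monomials. *)
Definition grass := {fsfun {fset nat} -> F with 0}.

Definition gzero : grass := [fsfun S in fset0 => (0 : F)].
Definition gone : grass := [fsfun S in [fset fset0] => (1 : F)].
Definition gen (i : nat) : grass := [fsfun S in [fset [fset i]] => (1 : F)].

Definition gadd (x y : grass) : grass :=
  [fsfun S in finsupp x `|` finsupp y => (x S + y S)%R].
Definition gscale (c : F) (x : grass) : grass :=
  [fsfun S in finsupp x => (c * x S)%R].

(* e_A e_B = gsign A B e_{A u B} if A, B disjoint, 0 otherwise *)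
Definition gsign (A B : {fset nat}) : F :=
  (-1) ^+ (\sum_(a <- A) \sum_(b <- B) (b < a)%N)%N.

Definition gmul (x y : grass) : grass :=
  [fsfun S in [fset A `|` B | A in finsupp x, B in finsupp y] =>
     \sum_(A <- finsupp x) \sum_(B <- finsupp y |
            (A `&` B == fset0) && (A `|` B == S))
        (gsign A B * x A * y B)%R].

Definition gsum (s : seq grass) : grass := foldr gadd gzero s.
Definition gprod (s : seq grass) : grass := foldr gmul gone s.

(* L = span of the e_i = elements supported on monomials of length 1 *)
Definition inL (x : grass) : bool := all (fun S => #|` S| == 1%N) (finsupp x).

Definition lin_part (x : grass) : grass :=
  [fsfun S in [fset S in finsupp x | #|` S| == 1%N] => x S].

Definition is_automorphism (phi : grass -> grass) : Prop :=
  [/\ forall x y, phi (gadd x y) = gadd (phi x) (phi y),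
      forall c x, phi (gscale c x) = gscale c (phi x),
      forall x y, phi (gmul x y) = gmul (phi x) (phi y),
      phi gone = gone & bijective phi].

Definition basis_of_L (gamma : grass -> Prop) : Prop :=
  [/\ forall v, gamma v -> inL v,
      forall (s : seq grass) (c : grass -> F), uniq s ->
        (forall v, v \in s -> gamma v) ->
        gsum [seq gscale (c v) v | v <- s] = gzero ->
        forall v, v \in s -> c v = 0 &
      forall x, inL x -> exists (s : seq grass) (c : grass -> F),
        (forall v, v \in s -> gamma v) /\
        x = gsum [seq gscale (c v) v | v <- s]].

Definition type4 (phi : grass -> grass) : Prop :=
  forall gamma, basis_of_L gamma ->
    forall v, gamma v -> phi v <> v /\ phi v <> gscale (-1) v.

(* the linearization phi_l: the endomorphism of E with phi_l(e_i) = u_i,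
   u_i the L-component of phi(e_i); on a monomial e_{i1}...e_{ik}
   (i1 < ... < ik) it gives u_{i1} ... u_{ik}, extended linearly. *)
Definition linearization (phi : grass -> grass) (x : grass) : grass :=
  gsum [seq gscale (x M)
              (gprod [seq lin_part (phi (gen i)) | i <- sort leq (M : seq nat)])
       | M <- finsupp x].

End Grassmann.

(* If the linearization of phi is the identity then phi(e_j) = e_j + (terms of
   length >= 2), and phi acts on a monomial e_M as the product of the phi(e_i),
   i in M.  Expanding e_j = phi(phi(e_j)) in this way and comparing the
   coefficients of a monomial e_T with #|T| >= 2, the terms of length < #|T|
   contribute, by induction on #|T|, only the coefficient of e_T in phi(e_j),
   the terms of length #|T| contribute that same coefficient once more, and the
   longer ones nothing; so twice this coefficient vanishes.  In characteristic
   different from 2 this forces phi(e_j) = e_j, which is excluded for type 4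
   automorphisms by the standard basis of L. *)
From HB Require Import structures.
From mathcomp Require Import all_boot all_order all_algebra finmap zify.
Set Implicit Arguments. Unset Strict Implicit. Unset Printing Implicit Defensive.
Import Order.TTheory GRing.Theory Num.Theory.
Local Open Scope fset_scope.
Local Open Scope ring_scope.

Lemma sum_if_eq_seq (R : nmodType) (T : eqType) (s : seq T) (c : T) (g : T -> R) :
  uniq s -> \sum_(b <- s) (if b == c then g b else 0) = if c \in s then g c else 0.
Proof.
elim: s => [|a s IH] /=; first by rewrite big_nil.
case/andP => aNs us; rewrite big_cons IH // in_cons.
have [<-|_] := eqVneq a c; first by rewrite (negbTE aNs) addr0.
by rewrite add0r.
Qed.

Lemma eq_big_fset_supp (R : nmodType) (T : choiceType) (K1 K2 : {fset T}) (f : T -> R) :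
  (forall a, a \in K1 -> a \notin K2 -> f a = 0) ->
  (forall a, a \in K2 -> a \notin K1 -> f a = 0) ->
  \sum_(a <- K1) f a = \sum_(a <- K2) f a.
Proof.
move=> f1 f2.
rewrite (big_fset_incl _ (fsubsetUl K1 K2)); last first.
  by move=> a; rewrite inE => /orP[->//|a2] /f2->.
rewrite [RHS](big_fset_incl _ (fsubsetUr K1 K2)) //.
by move=> a; rewrite inE => /orP[a1|->//] /f1->.
Qed.

Lemma fsetI_eq0_fsetU_eq (K : choiceType) (A B S : {fset K}) :
  ((A `&` B == fset0) && (A `|` B == S)) = (A `<=` S) && (B == S `\` A).
Proof.
apply/idP/idP.
  case/andP => /eqP AB0 /eqP <-; rewrite fsubsetUl /=.
  apply/eqP/fsetP => z; rewrite !inE.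
  have := congr1 (fun X => z \in X) AB0; rewrite /= !inE.
  by case: (z \in A); case: (z \in B).
case/andP => /fsubsetP AS /eqP ->; apply/andP; split; apply/eqP/fsetP => z.
  by rewrite !inE; case: (z \in A).
by rewrite !inE; case Az: (z \in A) => //=; rewrite AS.
Qed.

Lemma enum_fset_fset1 (K : choiceType) (j : K) : enum_fset [fset j] = [:: j].
Proof.
have : size (enum_fset [fset j]) = 1%N := cardfs1 j.
case e: (enum_fset [fset j]) => [|a [|b l]] // _.
have : a \in [fset j] by rewrite -[_ \in _]/(a \in enum_fset _) e mem_head.
by rewrite inE => /eqP ->.
Qed.

Section Grassmann.
Variable F : fieldType.
Implicit Types (x y : grass F) (A B M S T : {fset nat}).

Lemma grass_dflt x S : S \notin finsupp x -> x S = 0.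
Proof. exact: fsfun_dflt. Qed.

Lemma gzeroE S : gzero F S = 0.
Proof. by rewrite /gzero fsfunE; case: (S \in fset0). Qed.

Lemma goneE S : gone F S = (S == fset0)%:R.
Proof. by rewrite /gone fsfunE inE; case: ifP. Qed.

Lemma genE i S : gen F i S = (S == [fset i])%:R.
Proof. by rewrite /gen fsfunE inE; case: ifP. Qed.

Lemma gaddE x y S : gadd x y S = x S + y S.
Proof.
rewrite /gadd fsfunE; case: ifP => // /negbT.
by rewrite inE negb_or => /andP[xS yS]; rewrite !grass_dflt // addr0.
Qed.

Lemma gscaleE c x S : gscale c x S = c * x S.
Proof. by rewrite /gscale fsfunE; case: ifP => // /negbT/grass_dflt->; rewrite mulr0. Qed.

Lemma gsumE (s : seq (grass F)) S : gsum s S = \sum_(x <- s) x S.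
Proof.
elim: s => [|a s IH] /=; first by rewrite big_nil gzeroE.
by rewrite big_cons gaddE IH.
Qed.

Lemma gmulE x y S :
  gmul x y S = \sum_(A <- fpowerset S) gsign F A (S `\` A) * x A * y (S `\` A).
Proof.
pose t A := if A `<=` S then gsign F A (S `\` A) * x A * y (S `\` A) else 0.
have inner A : \sum_(B <- finsupp y | (A `&` B == fset0) && (A `|` B == S))
    gsign F A B * x A * y B = t A.
  rewrite big_mkcond /t; under eq_bigr => B _ do rewrite fsetI_eq0_fsetU_eq.
  case: ifP => AS /=; last by rewrite big1.
  rewrite (sum_if_eq_seq _ (fun B => gsign F A B * x A * y B)) ?fset_uniq //.
  by case: ifP => // /negbT/grass_dflt->; rewrite mulr0.
have sum_t : \sum_(A <- finsupp x) t A =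
    \sum_(A <- fpowerset S) gsign F A (S `\` A) * x A * y (S `\` A).
  rewrite (@eq_big_fset_supp _ _ _ (fpowerset S)).
  - by apply: eq_big_seq => A; rewrite fpowersetE /t => ->.
  - by move=> A _; rewrite fpowersetE /t => /negbTE ->.
  - by move=> A; rewrite fpowersetE /t => -> /grass_dflt->; rewrite mulr0 mul0r.
rewrite /gmul fsfunE; under eq_bigr => A _ do rewrite inner.
case: ifP => // /negbT Sout.
rewrite -sum_t big1_fset // => A xA _.
rewrite -(inner A) big1_fset // => B yB /andP[_ /eqP AB].
by case/negP: Sout; rewrite -AB; apply/imfset2P; exists A => //; exists B.
Qed.

Lemma gsign0r A : gsign F A fset0 = 1.
Proof. by rewrite /gsign big1 // => a _; exact: big_seq_fset0. Qed.

Lemma gsign0l B : gsign F fset0 B = 1.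
Proof. by rewrite /gsign big_seq_fset0. Qed.

Lemma gmulr1 x : gmul x (gone F) = x.
Proof.
apply/fsfunP => S; rewrite gmulE.
rewrite (eq_big_seq (fun A => if A == S then x A else 0)).
  by rewrite sum_if_eq_seq ?fset_uniq // fpowersetE fsubset_refl.
move=> A; rewrite fpowersetE => AS; rewrite goneE fsetD_eq0.
have -> : (S `<=` A) = (A == S) by rewrite eqEfsubset AS.
by case: eqP => [->|_]; rewrite ?fsetDv ?gsign0r ?mul1r ?mulr1 ?mulr0.
Qed.

Lemma gmul_coef0 x y : gmul x y fset0 = x fset0 * y fset0.
Proof. by rewrite gmulE fpowerset0 big_seq_fset1 fsetDv gsign0l mul1r. Qed.

Lemma gmul_gen_self j : gmul (gen F j) (gen F j) = gzero F.
Proof.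
apply/fsfunP => S; rewrite gmulE gzeroE big1_fset // => A _ _.
rewrite !genE; have [A1|] := eqP; last by rewrite mulr0 mul0r.
have [SA1|] := eqP; last by rewrite mulr0.
have : j \in S `\` A by rewrite SA1 inE.
by rewrite inE A1 inE eqxx.
Qed.

Definition vanish_below d x := forall S, (#|` S| < d)%N -> x S = 0.
Definition agree_upto d x y := forall S, (#|` S| <= d)%N -> x S = y S.

Lemma vanish_below_agree d x y : vanish_below d x -> agree_upto d x y -> vanish_below d y.
Proof. by move=> x0 xy S Sd; rewrite -xy ?x0 // ltnW. Qed.

Lemma gmul_vanish_below a b x y :
  vanish_below a x -> vanish_below b y -> vanish_below (a + b) (gmul x y).
Proof.
move=> x0 y0 S Sab; rewrite gmulE big1_fset // => A; rewrite fpowersetE => AS _.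
have := cardfsDS AS; have := fsubset_leq_card AS.
case: (ltnP #|` A| a) => Aa *; first by rewrite x0 // mulr0 mul0r.
by rewrite y0 ?mulr0 //; lia.
Qed.

Lemma gmul_agree_upto a b x x' y y' :
  vanish_below a x -> agree_upto a x x' -> vanish_below b y -> agree_upto b y y' ->
  agree_upto (a + b) (gmul x y) (gmul x' y').
Proof.
move=> x0 xx' y0 yy' S Sab; rewrite !gmulE; apply: eq_big_seq => A.
rewrite fpowersetE => AS; have := cardfsDS AS; have := fsubset_leq_card AS.
case: (leqP #|` A| a) => Aa *.
  rewrite -xx' //; case: (leqP #|` S `\` A| b) => Bb; first by rewrite yy'.
  by rewrite x0 ?mulr0 ?mul0r //; lia.
by rewrite -yy' ?y0 ?mulr0 //; lia.
Qed.

Lemma gprod_vanish_agree (I : Type) (f f' : I -> grass F) (r : seq I) :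
  (forall i, vanish_below 1 (f i)) -> (forall i, agree_upto 1 (f i) (f' i)) ->
  vanish_below (size r) (gprod (map f r)) /\
  agree_upto (size r) (gprod (map f r)) (gprod (map f' r)).
Proof.
move=> f0 ff'; elim: r => [|i r [IH0 IHagree]] //=.
by rewrite -add1n; split; [apply: gmul_vanish_below | apply: gmul_agree_upto].
Qed.

Lemma gen_basis_of_L : basis_of_L (fun v => exists j, v = gen F j).
Proof.
split.
- move=> v [j ->]; apply/(allP (s := finsupp (gen F j))) => S; rewrite mem_finsupp genE.
  by case: (S =P [fset j]) => [->|]; rewrite ?cardfs1 ?eqxx.
- move=> s c us sgen sum0 v vs; have [j vj] := sgen v vs.
  have := congr1 (fun z : grass F => z [fset j]) sum0; rewrite /= gsumE gzeroE big_map.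
  rewrite (bigD1_seq v) //= big_seq_cond big1 ?addr0.
    by rewrite gscaleE vj genE eqxx mulr1.
  move=> w /andP[ws wv]; have [l wl] := sgen w ws.
  rewrite gscaleE wl genE; case: eqP => [/fset1_inj lj|]; last by rewrite mulr0.
  by move: wv; rewrite wl vj lj eqxx.
- move=> x /(allP (s := finsupp x)) xL.
  pose hd S := head 0%N (enum_fset S).
  have genhd S U : S \in finsupp x -> gen F (hd S) U = (U == S)%:R.
    by move/xL; case/cardfs1P => a ->; rewrite genE /hd enum_fset_fset1.
  pose c (v : grass F) := \sum_(S <- finsupp x) x S * v S.
  exists [seq gen F (hd M) | M <- finsupp x], c; split.
    by move=> v /mapP [M _ ->]; exists (hd M).
  apply/fsfunP => T; rewrite gsumE !big_map.
  rewrite (eq_big_seq (fun S => if S == T then x S else 0)).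
    by rewrite sum_if_eq_seq ?fset_uniq //; case: ifP => // /negbT/grass_dflt->.
  move=> S xS; rewrite gscaleE genhd // /c.
  rewrite (eq_big_seq (fun S' => if S' == S then x S' else 0)).
    by rewrite sum_if_eq_seq ?fset_uniq // xS eq_sym; case: eqP; rewrite ?mulr1 ?mulr0.
  by move=> S' xS'; rewrite genhd // mulr_natr mulrb.
Qed.

Definition monomial_in (u : nat -> grass F) M : grass F :=
  gprod [seq u i | i <- sort leq (enum_fset M)].

Lemma monomial_in_fset1 u j : monomial_in u [fset j] = u j.
Proof. by rewrite /monomial_in enum_fset_fset1 /= gmulr1. Qed.

Section Automorphism.
Variable phi : grass F -> grass F.
Hypothesis phi_aut : is_automorphism phi.

Lemma aut_gzero : phi (gzero F) = gzero F.
Proof.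
have [_ phiZ _ _ _] := phi_aut.
have scale0 z : gscale 0 z = gzero F.
  by apply/fsfunP => S; rewrite gscaleE gzeroE mul0r.
by rewrite -(scale0 (gzero F)) phiZ scale0.
Qed.

Lemma aut_gsum s : phi (gsum s) = gsum (map phi s).
Proof.
have [phiD _ _ _ _] := phi_aut.
by elim: s => [|a s IH] /=; rewrite ?aut_gzero // phiD IH.
Qed.

Lemma aut_gprod s : phi (gprod s) = gprod (map phi s).
Proof.
have [_ _ phiM phi1 _] := phi_aut.
by elim: s => [|a s IH] /=; rewrite ?phi1 // phiM IH.
Qed.

(* Constant terms multiply, and e_j is nilpotent. *)
Lemma aut_gen_coef0 j : phi (gen F j) fset0 = 0.
Proof.
have [_ _ phiM _ _] := phi_aut.
have := congr1 (fun z : grass F => phi z fset0) (gmul_gen_self j).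
by rewrite /= phiM gmul_coef0 aut_gzero gzeroE => /eqP; rewrite mulf_eq0 orbb => /eqP.
Qed.

Lemma linearizationE x T :
  linearization phi x T =
  \sum_(M <- finsupp x) x M * monomial_in (fun i => lin_part (phi (gen F i))) M T.
Proof. by rewrite /linearization gsumE big_map; apply: eq_bigr => M _; rewrite gscaleE. Qed.

Hypothesis phi_lin : forall x, linearization phi x = x.

Lemma lin_part_aut_gen j : lin_part (phi (gen F j)) = gen F j.
Proof.
apply/fsfunP => T; rewrite -[in RHS](phi_lin (gen F j)) linearizationE.
rewrite (@eq_big_fset_supp _ _ _ [fset [fset j]]); first last.
- by move=> M; rewrite inE => /eqP-> /grass_dflt->; rewrite mul0r.
- by move=> M _; rewrite inE genE => /negbTE->; rewrite mul0r.
by rewrite big_seq_fset1 monomial_in_fset1 genE eqxx mul1r.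
Qed.

Lemma aut_gen_vanish j : vanish_below 1 (phi (gen F j)).
Proof. by move=> S; rewrite ltnS leqn0 => /eqP/cardfs0_eq->; apply: aut_gen_coef0. Qed.

Lemma aut_gen_agree j : agree_upto 1 (phi (gen F j)) (gen F j).
Proof.
move=> S; rewrite leq_eqVlt ltnS leqn0 => /orP[/eqP S1|/eqP/cardfs0_eq->].
  rewrite -[in RHS]lin_part_aut_gen /lin_part fsfunE !inE S1 eqxx andbT.
  by case: ifP => // /negbT/grass_dflt->.
by rewrite aut_gen_coef0 genE eq_sym -cardfs_eq0 cardfs1.
Qed.

Lemma grass_expansion x T :
  x T = \sum_(M <- finsupp x) x M * monomial_in (gen F) M T.
Proof.
rewrite -[in LHS](phi_lin x) linearizationE; apply: eq_bigr => M _.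
by rewrite /monomial_in (eq_map lin_part_aut_gen).
Qed.

Lemma aut_expansion x T :
  phi x T = \sum_(M <- finsupp x) x M * monomial_in (fun i => phi (gen F i)) M T.
Proof.
have [_ phiZ _ _ _] := phi_aut.
rewrite -[x in LHS]phi_lin /linearization aut_gsum -map_comp gsumE big_map.
apply: eq_bigr => M _ /=; rewrite phiZ gscaleE aut_gprod -map_comp.
by rewrite /monomial_in; congr (_ * gprod _ T); apply: eq_map => i /=; rewrite lin_part_aut_gen.
Qed.

Hypothesis phi_invol : forall x, phi (phi x) = x.
Hypothesis two_neq0 : (2%:R : F) != 0.

Section InductionStep.
Variables (j n : nat) (T : {fset nat}).
Hypotheses (n_gt1 : (1 < n)%N) (cardT : #|` T| = n).
Hypothesis IH : forall M, (#|` M| < n)%N -> phi (gen F j) M = gen F j M.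

Let G := phi (gen F j).

Lemma gen_coef_ge2 : gen F j T = 0.
Proof. by rewrite genE; case: eqP => // TE; move: n_gt1; rewrite -cardT TE cardfs1. Qed.

(* Monomials shorter than T contribute only through e_j, those of the length of
   T see no difference between e_M and phi(e_M), longer ones vanish at T. *)
Lemma aut_monomial_coef M :
  G M * monomial_in (fun i => phi (gen F i)) M T =
  G M * monomial_in (gen F) M T + (if M == [fset j] then G T else 0).
Proof.
have [mon0 monE] := gprod_vanish_agree (sort leq (enum_fset M)) aut_gen_vanish aut_gen_agree.
have mon0' := vanish_below_agree mon0 monE.
rewrite size_sort in mon0 monE mon0'.
have Mj_long : (n <= #|` M|)%N -> (M == [fset j]) = false.
  by move=> nM; apply/negbTE/eqP => Mj; move: nM; rewrite Mj cardfs1; lia.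
case: (ltngtP #|` M| n) => Mn.
- rewrite IH // genE; have [->|] := eqP; last by rewrite !mul0r addr0.
  by rewrite !monomial_in_fset1 gen_coef_ge2 mulr0 add0r mul1r.
- by rewrite Mj_long ?(ltnW Mn) // /monomial_in mon0 ?mon0' ?cardT // mulr0 addr0.
- by rewrite Mj_long ?Mn // /monomial_in monE ?cardT ?Mn // addr0.
Qed.

Lemma aut_gen_coef_step : G T = gen F j T.
Proof.
have Gj : G [fset j] = 1 by rewrite aut_gen_agree ?cardfs1 // genE eqxx.
have := aut_expansion G T; rewrite phi_invol gen_coef_ge2.
under eq_bigr => M _ do rewrite aut_monomial_coef.
rewrite big_split /= -grass_expansion sum_if_eq_seq ?fset_uniq // mem_finsupp Gj oner_neq0.
by move/eqP; rewrite eq_sym -mulr2n -mulr_natr mulf_eq0 (negbTE two_neq0) orbF => /eqP.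
Qed.

End InductionStep.

Lemma aut_gen_fixed j : phi (gen F j) = gen F j.
Proof.
apply/fsfunP => T; move: {2}#|` T| (erefl #|` T|) => n.
elim/ltn_ind: n T => n IH T cardT.
case: (leqP n 1) => n1; first by rewrite aut_gen_agree // cardT.
by apply: (aut_gen_coef_step n1 cardT) => M /IH; apply.
Qed.

End Automorphism.
End Grassmann.

Theorem theorem5p1 (F : fieldType) (charF0 : [pchar F]%R =i pred0)
  (phi : grass F -> grass F) :
  is_automorphism phi ->
  (forall x, phi (phi x) = x) ->
  type4 phi ->
  ~ (forall x, linearization phi x = x).
Proof.
move=> phi_aut phi_invol phi_type4 phi_lin.
have two_neq0 : (2%:R : F) != 0 by have := charF0 2; rewrite !inE /= => ->.
have [not_fixed _] := phi_type4 _ (gen_basis_of_L F) (gen F 0) (ex_intro _ 0%N erefl).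
exact/not_fixed/aut_gen_fixed.
Qed.
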